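(* Let $S$ be an inverse semigroup, let $\alpha$ be an automorphism of $S$, and define $\psi : S\to S$ by $x\psi = x^{-1}\cdot (x\alpha)$ for all $x\in S$. Then: (1) If $\mathrm{Fix}(\alpha) = E(S)$, then $\psi$ is injective. (2) If $\psi$ is injective, then $\mathrm{Fix}(\alpha)\subseteq E(S)$.
   Context: In an inverse semigroup $S$, $x^{-1}$ denotes the unique inverse of $x$ (the unique element with $xx^{-1}x=x$ and $x^{-1}xx^{-1}=x^{-1}$). $E(S)$ is the set of idempotents of $S$; for an automorphism $\alpha$ of $S$ (written on the right, $x\mapsto x\alpha$), $\mathrm{Fix}(\alpha) = \{x\in S \mid x\alpha = x\}$. *)

From Stdlib Require Import Setoid.

Record InverseSemigroup := {
  carrier :> Type;
  smul : carrier -> carrier -> carrier;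
  sinv : carrier -> carrier;
  smul_assoc : forall x y z, smul x (smul y z) = smul (smul x y) z;
  sinv_l : forall x, smul (smul x (sinv x)) x = x;
  sinv_r : forall x, smul (smul (sinv x) x) (sinv x) = sinv x;
  sinv_unique : forall x y, smul (smul x y) x = x -> smul (smul y x) y = y -> y = sinv x
}.

Arguments smul {i} _ _.
Arguments sinv {i} _.

Definition is_idempotent {S : InverseSemigroup} (e : S) : Prop := smul e e = e.

Definition is_automorphism {S : InverseSemigroup} (a : S -> S) : Prop :=
  (forall x y, a (smul x y) = smul (a x) (a y)) /\
  (forall x y, a x = a y -> x = y) /\
  (forall y, exists x, a x = y).

Definition is_fixed {S : InverseSemigroup} (a : S -> S) (x : S) : Prop := a x = x.

Definition psi {S : InverseSemigroup} (a : S -> S) (x : S) : S := smul (sinv x) (a x).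


(* We first develop the basic algebra of an inverse semigroup S: inverses are
   involutive, idempotents are self-inverse, idempotents commute (the classical
   core fact), and hence (uv)^-1 = v^-1 u^-1.  For a multiplicative map
   alpha : S -> S we then show that alpha preserves inverses, and study
   psi(x) = x^-1 (x alpha).
   (2) If x is fixed by alpha then psi(x) = x^-1 x = psi(x^-1 x); so an
       injective psi forces x = x^-1 x, which is idempotent.
   (1) If alpha fixes every idempotent, then x alpha = x psi(x) and
       psi(x) psi(x)^-1 = x^-1 x.  Consequently psi(x) = psi(y) makes
       e = x y^-1 a fixed point of alpha, hence an idempotent when
       Fix(alpha) is contained in E(S).  Since also x^-1 x = y^-1 y and
       e = e^-1 = y x^-1, we get x = e y and y = e x, whence
       x = e e x = e x = y. *)

Section InverseSemigroupTheory.
Variable S : InverseSemigroup.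
Local Notation "x ** y" := (@smul S x y) (at level 40, left associativity).
Local Notation "x ^-" := (@sinv S x) (at level 20).

Local Ltac reassoc := rewrite ?smul_assoc; reflexivity.

Lemma inv_inv (x : S) : (x ^-) ^- = x.
Proof. symmetry. apply sinv_unique; [apply sinv_r | apply sinv_l]. Qed.

Lemma idempotent_inv (e : S) : is_idempotent e -> e ^- = e.
Proof. intro He. symmetry. apply sinv_unique; rewrite He; exact He. Qed.

Lemma idempotent_mul_inv (x : S) : is_idempotent (x ** x ^-).
Proof. unfold is_idempotent. rewrite smul_assoc, sinv_l. reflexivity. Qed.

Lemma idempotent_inv_mul (x : S) : is_idempotent (x ^- ** x).
Proof. unfold is_idempotent. rewrite smul_assoc, sinv_r. reflexivity. Qed.

(* Idempotents are closed under products: with z = (ef)^-1, the element f z e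
   is another inverse of ef, so z = f z e, which makes z (hence ef = z^-1)
   idempotent. *)
Lemma idempotent_mul (e f : S) :
  is_idempotent e -> is_idempotent f -> is_idempotent (e ** f).
Proof.
  unfold is_idempotent. intros He Hf.
  set (z := (e ** f) ^-).
  assert (Hzz : z ** (e ** f) ** z = z) by apply sinv_r.
  assert (Hz : f ** z ** e = z).
  { apply sinv_unique.
    - replace (e ** f ** (f ** z ** e) ** (e ** f))
        with (e ** (f ** f) ** z ** (e ** e) ** f) by reassoc.
      rewrite He, Hf.
      replace (e ** f ** z ** e ** f) with (e ** f ** z ** (e ** f)) by reassoc.
      apply sinv_l.
    - replace (f ** z ** e ** (e ** f) ** (f ** z ** e))
        with (f ** (z ** (e ** e ** (f ** f)) ** z) ** e) by reassoc.
      rewrite He, Hf, Hzz. reflexivity. }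
  assert (Hz_idem : z ** z = z).
  { rewrite <- Hz at 1 2.
    replace (f ** z ** e ** (f ** z ** e)) with (f ** (z ** (e ** f) ** z) ** e)
      by reassoc.
    rewrite Hzz. exact Hz. }
  replace (e ** f) with (z ^-) by apply inv_inv.
  rewrite (idempotent_inv z Hz_idem). exact Hz_idem.
Qed.

(* Idempotents commute: f e is an inverse of the idempotent e f, which is its
   own unique inverse. *)
Lemma idempotent_comm (e f : S) :
  is_idempotent e -> is_idempotent f -> e ** f = f ** e.
Proof.
  intros He Hf.
  assert (Hef := idempotent_mul e f He Hf).
  assert (Hfe := idempotent_mul f e Hf He).
  unfold is_idempotent in *.
  rewrite <- (idempotent_inv (e ** f) Hef).
  symmetry. apply sinv_unique.
  - replace (e ** f ** (f ** e) ** (e ** f)) with (e ** (f ** f) ** (e ** e) ** f)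
      by reassoc.
    rewrite He, Hf, <- smul_assoc. exact Hef.
  - replace (f ** e ** (e ** f) ** (f ** e)) with (f ** (e ** e) ** (f ** f) ** e)
      by reassoc.
    rewrite He, Hf, <- smul_assoc. exact Hfe.
Qed.

Lemma inv_mul (u v : S) : (u ** v) ^- = v ^- ** u ^-.
Proof.
  assert (Hcomm : v ** v ^- ** (u ^- ** u) = u ^- ** u ** (v ** v ^-))
    by (apply idempotent_comm; [apply idempotent_mul_inv | apply idempotent_inv_mul]).
  symmetry. apply sinv_unique.
  - replace (u ** v ** (v ^- ** u ^-) ** (u ** v))
      with (u ** (v ** v ^- ** (u ^- ** u)) ** v) by reassoc.
    rewrite Hcomm.
    replace (u ** (u ^- ** u ** (v ** v ^-)) ** v)
      with (u ** u ^- ** u ** (v ** v ^- ** v)) by reassoc.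
    rewrite !sinv_l. reflexivity.
  - replace (v ^- ** u ^- ** (u ** v) ** (v ^- ** u ^-))
      with (v ^- ** (u ^- ** u ** (v ** v ^-)) ** u ^-) by reassoc.
    rewrite <- Hcomm.
    replace (v ^- ** (v ** v ^- ** (u ^- ** u)) ** u ^-)
      with (v ^- ** v ** v ^- ** (u ^- ** u ** u ^-)) by reassoc.
    rewrite !sinv_r. reflexivity.
Qed.

Section Psi.
Variable alpha : S -> S.
Hypothesis alpha_mul : forall x y : S, alpha (x ** y) = alpha x ** alpha y.

Lemma alpha_inv (x : S) : alpha (x ^-) = (alpha x) ^-.
Proof.
  apply sinv_unique; rewrite <- !alpha_mul;
    [rewrite sinv_l | rewrite sinv_r]; reflexivity.
Qed.

(* On a fixed point x, psi x = x^-1 x, and x^-1 x is again fixed, so psi takes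
   the same value on x and on x^-1 x. *)
Lemma psi_fixed (x : S) :
  is_fixed alpha x -> psi alpha x = psi alpha (x ^- ** x).
Proof.
  unfold is_fixed, psi. intro Hx.
  rewrite alpha_mul, alpha_inv, Hx, (idempotent_inv _ (idempotent_inv_mul x)).
  symmetry. apply idempotent_inv_mul.
Qed.

Lemma fixed_idempotent_of_psi_injective :
  (forall x y : S, psi alpha x = psi alpha y -> x = y) ->
  forall x : S, is_fixed alpha x -> is_idempotent x.
Proof.
  intros Hinj x Hx.
  rewrite (Hinj x (x ^- ** x) (psi_fixed x Hx)).
  apply idempotent_inv_mul.
Qed.

Section FixesIdempotents.
Hypothesis alpha_fixes_idempotents :
  forall e : S, is_idempotent e -> is_fixed alpha e.

(* Since alpha fixes x x^-1, we have x alpha = x psi(x). *)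
Lemma alpha_eq_mul_psi (x : S) : alpha x = x ** psi alpha x.
Proof.
  unfold psi.
  rewrite smul_assoc, <- (alpha_fixes_idempotents _ (idempotent_mul_inv x)).
  rewrite <- alpha_mul, sinv_l. reflexivity.
Qed.

Lemma psi_mul_inv (x : S) : psi alpha x ** (psi alpha x) ^- = x ^- ** x.
Proof.
  unfold psi. rewrite inv_mul, inv_inv, <- alpha_inv.
  replace (x ^- ** alpha x ** (alpha (x ^-) ** x))
    with (x ^- ** alpha (x ** x ^-) ** x) by (rewrite alpha_mul; reassoc).
  rewrite (alpha_fixes_idempotents _ (idempotent_mul_inv x)).
  rewrite smul_assoc, sinv_r. reflexivity.
Qed.

(* If psi(x) = psi(y) = p, then (x y^-1) alpha = x p p^-1 y^-1
   = x y^-1 y y^-1 = x y^-1. *)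
Lemma psi_eq_fixed (x y : S) :
  psi alpha x = psi alpha y -> is_fixed alpha (x ** y ^-).
Proof.
  unfold is_fixed. intro Hpsi.
  rewrite alpha_mul, alpha_inv, (alpha_eq_mul_psi x), (alpha_eq_mul_psi y), Hpsi.
  rewrite inv_mul.
  replace (x ** psi alpha y ** ((psi alpha y) ^- ** y ^-))
    with (x ** (psi alpha y ** (psi alpha y) ^-) ** y ^-) by reassoc.
  rewrite psi_mul_inv.
  replace (x ** (y ^- ** y) ** y ^-) with (x ** (y ^- ** y ** y ^-)) by reassoc.
  rewrite sinv_r. reflexivity.
Qed.

Lemma psi_injective :
  (forall x : S, is_fixed alpha x -> is_idempotent x) ->
  forall x y : S, psi alpha x = psi alpha y -> x = y.
Proof.
  intros Hfixed x y Hpsi.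
  assert (He : is_idempotent (x ** y ^-)) by apply Hfixed, psi_eq_fixed, Hpsi.
  assert (Hsym : y ** x ^- = x ** y ^-).
  { rewrite <- (idempotent_inv _ He), inv_mul, inv_inv. reflexivity. }
  assert (Hsupp : x ^- ** x = y ^- ** y) by (rewrite <- !psi_mul_inv, Hpsi; reflexivity).
  assert (Hx : x = x ** y ^- ** y).
  { rewrite <- smul_assoc, <- Hsupp, smul_assoc, sinv_l. reflexivity. }
  assert (Hy : y = x ** y ^- ** x).
  { rewrite <- Hsym, <- smul_assoc, Hsupp, smul_assoc, sinv_l. reflexivity. }
  unfold is_idempotent in He.
  transitivity (x ** y ^- ** (x ** y ^- ** x)).
  - rewrite <- Hy. exact Hx.
  - rewrite smul_assoc, He. symmetry. exact Hy.
Qed.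

End FixesIdempotents.
End Psi.
End InverseSemigroupTheory.

Theorem lemma2p1 (S : InverseSemigroup) (alpha : S -> S)
  (Halpha : is_automorphism alpha) :
  ((forall x : S, is_fixed alpha x <-> is_idempotent x) ->
     forall x y : S, psi alpha x = psi alpha y -> x = y) /\
  ((forall x y : S, psi alpha x = psi alpha y -> x = y) ->
     forall x : S, is_fixed alpha x -> is_idempotent x).
Proof.
  destruct Halpha as [alpha_mul _].
  split.
  - intro Hfix. apply psi_injective; [exact alpha_mul | |]; apply Hfix.
  - apply fixed_idempotent_of_psi_injective, alpha_mul.
Qed.
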